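(* Let $K,L\ (\le K),F,Z,S,u$ be positive integers and let $\hat{\mathbf{A}}$ be a $(K,L,F,Z,S)$ EPDA. Then the $F\times uK$ array $\mathbf{A}=[\hat{\mathbf{A}}\,|\,\hat{\mathbf{A}}\,|\,\cdots\,|\,\hat{\mathbf{A}}]$ obtained by placing $u$ copies of $\hat{\mathbf{A}}$ side by side is a $(uK,uL,F,Z,S)$ EPDA.
   Context: Notation: $[n]=\{1,\dots,n\}$. An $F\times K$ array $\mathbf{A}=[a_{j,k}]$ with entries either a symbol $\star$ or integers in $[S]$ is a $(K,L,F,Z,S)$ EPDA (where $L\le K$) if: (C1) $\star$ appears exactly $Z$ times in each column; (C2) every integer in $[S]$ occurs at least once; (C3) no integer appears more than once in any column; (C4) for each $s\in[S]$, letting $\mathbf{A}^{(s)}$ be the subarray obtained by deleting all rows and columns of $\mathbf{A}$ not containing $s$, no row of $\mathbf{A}^{(s)}$ contains more than $L$ integer entries. *)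

From mathcomp Require Import all_boot.
Unset Printing Implicit Defensive.

(* An F x K array with entries either the symbol "star" (None) or an
   integer (Some s). *)
Definition array (F K : nat) := 'I_F -> 'I_K -> option nat.

Definition is_EPDA (K L F Z S : nat) (A : array F K) : Prop :=
  L <= K /\
      (forall j k s, A j k = Some s -> 1 <= s <= S) /\
      (forall k, #|[set j | A j k == None]| = Z) /\
      (forall s, 1 <= s <= S -> exists j k, A j k = Some s) /\
      (forall k j j' s, A j k = Some s -> A j' k = Some s -> j = j') /\
      (* C4: in the subarray A^(s) (rows and columns containing s), each row
         has at most L integer entries *)
      (forall s j, (exists k, A j k = Some s) ->
         #|[set k | [exists j', A j' k == Some s] & A j k != None]| <= L).

Definition modK (K : nat) (hK : 0 < K) (u : nat) (c : 'I_(u * K)) : 'I_K :=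
  @Ordinal K (c %% K) (ltn_pmod c hK).

Definition hrep (F K u : nat) (hK : 0 < K) (A : array F K) : array F (u * K) :=
  fun j c => A j (@modK K hK u c).

From mathcomp Require Import all_boot.

(* Column c of the repeated array is column c mod K of Ahat, so every entry
   and every column of Ahat reappears unchanged, while in C4 each column of
   Ahat^(s) gives rise to at most u columns of A^(s). *)

Section ColumnsModK.

Variables (K u : nat) (hK : 0 < K).

Lemma modK_widen (hu : 0 < u) (k : 'I_K) :
  modK K hK u (widen_ord (leq_pmull K hu) k) = k.
Proof. by apply: val_inj; rewrite /= modn_small. Qed.

Lemma card_preim_modK (T : {set 'I_K}) :
  #|modK K hK u @^-1: T| <= u * #|T|.
Proof.
have div_lt (c : 'I_(u * K)) : c %/ K < u by rewrite ltn_divLR.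
pose split_col c := (Ordinal (div_lt c), modK K hK u c).
have split_col_inj : injective split_col.
  move=> a b [eq_div eq_mod]; apply: val_inj => /=.
  by rewrite (divn_eq a K) (divn_eq b K) eq_div eq_mod.
rewrite -(card_imset _ split_col_inj).
have -> : u * #|T| = #|setX [set: 'I_u] T| by rewrite cardsX cardsT card_ord.
apply/subset_leq_card/subsetP => _ /imsetP [c c_in ->].
by rewrite !inE in c_in *.
Qed.

End ColumnsModK.

Theorem lemma4 (K L F Z S u : nat) (hK : 0 < K) (hL : 0 < L) (hF : 0 < F)
  (hZ : 0 < Z) (hS : 0 < S) (hu : 0 < u) (Ahat : array F K) :
  is_EPDA K L F Z S Ahat ->
  is_EPDA (u * K) (u * L) F Z S (@hrep F K u hK Ahat).
Proof.
move=> [le_LK [range [C1 [C2 [C3 C4]]]]]; rewrite /hrep.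
split; first by rewrite leq_mul2l le_LK orbT.
split; first by move=> j c s; apply: range.
split; first by move=> c; apply: C1.
split.
  move=> s /C2 [j [k Ajk]].
  by exists j, (widen_ord (leq_pmull K hu) k); rewrite modK_widen.
split; first by move=> c j j' s; apply: C3.
move=> s j [c Ajc].
apply: leq_trans (leq_mul (leqnn u) (C4 s j (ex_intro _ _ Ajc))).
apply: leq_trans (subset_leq_card _) (card_preim_modK _ _ hK _).
by apply/subsetP => c'; rewrite !inE.
Qed.
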